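(* Let $F$ be a face of $\delta\mathcal{A}_{\bm o}$ and let $\bm a,\bm b\in\operatorname{relint}(F)$. Then (i) the parallel translations $\mathcal{A}_{\bm a}$ and $\mathcal{A}_{\bm b}$ are normally equivalent and combinatorially equivalent; (ii) the conings $c\mathcal{A}_{\bm a}$ and $c\mathcal{A}_{\bm b}$ are combinatorially equivalent; (iii) the elementary lifts $\mathcal{A}^{\bm a}$ and $\mathcal{A}^{\bm b}$ are combinatorially equivalent.
   Context: Fix nonzero vectors $\bm u_1,\dots,\bm u_m\in\mathbb{R}^n$ (repetitions and parallel vectors allowed). Derived arrangement: a circuit is a subset $C\subseteq[m]$ such that the indexed family $\{\bm u_i: i\in C\}$ is a minimal linearly dependent family; for each circuit fix $\bm c^C\in\mathbb{R}^m$ with $\sum_i c_i\bm u_i=\bm 0$ and $c_i\ne 0\iff i\in C$. The derived arrangement $\delta\mathcal{A}_{\bm o}$ is the arrangement in $\mathbb{R}^m$ of hyperplanes $\langle\bm c^C,\bm y\rangle=0$ over all circuits $C$; its open faces are the nonempty sets $\{\bm y:\operatorname{sign}\langle\bm c^C,\bm y\rangle=\epsilon_C\ \forall C\}$ for fixed signs $\epsilon_C$, its faces are their closures, and $\operatorname{relint}(F)$ is the open face with closure $F$. Arrangements: for $\bm a\in\mathbb{R}^m$, the parallel translation $\mathcal{A}_{\bm a}$ is the indexed family of affine hyperplanes $H_i=\{\bm x\in\mathbb{R}^n:\langle\bm u_i,\bm x\rangle=a_i\}$, $i=1,\dots,m$; the coning $c\mathcal{A}_{\bm a}$ is the family in $\mathbb{R}^{n+1}$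 of the $m+1$ linear hyperplanes $\{(\bm x,x_{n+1}):\langle\bm u_i,\bm x\rangle+a_ix_{n+1}=0\}$, $i=1,\dots,m$, together with $K_0=\{x_{n+1}=0\}$; the elementary lift $\mathcal{A}^{\bm a}$ is the family in $\mathbb{R}^{n+1}$ of the $m$ hyperplanes $\{\langle\bm u_i,\bm x\rangle+a_ix_{n+1}=0\}$, $i=1,\dots,m$. For an arrangement $\mathcal{A}$ of finitely many affine hyperplanes $\{\bm z:\langle\bm w_i,\bm z\rangle=d_i\}$, the open faces are the nonempty subsets of points having the same sign vector $(\operatorname{sign}(\langle\bm w_i,\bm z\rangle-d_i))_i$, the faces are their closures, and the face poset $\mathcal{F}(\mathcal{A})$ is the set of faces ordered by inclusion. Two arrangements are combinatorially equivalent if their face posets are isomorphic. For a nonempty convex polyhedron $P$, $h_P(\bm u)=\sup_{\bm x\in P}\langle\bm u,\bm x\rangle$, $N_P(\bm x)=\{\bm u:\langle\bm u,\bm x\rangle=h_P(\bm u)\}$ for $\bm x\in P$, $N_P(G)=N_P(\bm x)$ for $\bm x\in\operatorname{relint}(G)$, and the normal fan $\mathcal{N}(P)$ is the set of all $N_P(G)$, $G$ a nonempty face; $P,Q$ are normally equivalent if $\mathcal{N}(P)=\mathcal{N}(Q)$. Two arrangements $\mathcal{A},\mathcal{A}'$ in the same $\mathbb{R}^n$ are normally equivalent if there is an order-preserving bijection $\Psi:\mathcal{F}(\mathcal{A})\to\mathcal{F}(\mathcal{A}')$ such that $F$ and $\Psi(F)$ are normally equivalent for every face $F$. *)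

From HB Require Import structures.
From mathcomp Require Import all_boot all_order all_algebra.
From mathcomp Require Import all_classical all_reals all_analysis.

Set Implicit Arguments.
Unset Strict Implicit.
Unset Printing Implicit Defensive.

Import Order.TTheory GRing.Theory Num.Theory.
Import numFieldNormedType.Exports.
Local Open Scope classical_set_scope.
Local Open Scope ring_scope.

Section Defs.
Variable R : realType.

Definition dotv (k : nat) (u x : 'rV[R]_k) : R := \sum_(i < k) u 0 i * x 0 i.

(* An arrangement in R^k: hyperplanes {z | <w i, z> = d i} for the indices i
   in the index set A (a subset of an index type I). *)
Definition same_sign (k : nat) (I : Type) (A : set I) (w : I -> 'rV[R]_k)
  (d : I -> R) (x y : 'rV[R]_k) : Prop :=
  forall i, A i -> Num.sg (dotv (w i) x - d i) = Num.sg (dotv (w i) y - d i).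

Definition arr_open_faces (k : nat) (I : Type) (A : set I) (w : I -> 'rV[R]_k)
  (d : I -> R) : set (set 'rV[R]_k) :=
  [set O | exists x, O = [set y | same_sign A w d x y]].

(* faces: closures of open faces; the face poset is this set ordered by `<=` *)
Definition arr_faces (k : nat) (I : Type) (A : set I) (w : I -> 'rV[R]_k)
  (d : I -> R) : set (set 'rV[R]_k) :=
  [set closure O | O in arr_open_faces A w d].

Definition arr_relint (k : nat) (I : Type) (A : set I) (w : I -> 'rV[R]_k)
  (d : I -> R) (F : set 'rV[R]_k) : set 'rV[R]_k :=
  [set y | exists2 O, arr_open_faces A w d O & closure O = F /\ O y].

Definition poset_iso (k k' : nat) (FA : set (set 'rV[R]_k))
  (FB : set (set 'rV[R]_k')) : Prop :=
  exists Psi : set 'rV[R]_k -> set 'rV[R]_k',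
    [/\ (forall F, FA F -> FB (Psi F)),
        (forall F G, FA F -> FA G -> Psi F = Psi G -> F = G),
        (forall G', FB G' -> exists2 F, FA F & Psi F = G') &
        (forall F G, FA F -> FA G -> (F `<=` G <-> Psi F `<=` Psi G))].

Definition support_fun (k : nat) (P : set 'rV[R]_k) (u : 'rV[R]_k) : \bar R :=
  ereal_sup [set (dotv u x)%:E | x in P].

Definition normal_cone (k : nat) (P : set 'rV[R]_k) (x : 'rV[R]_k)
  : set 'rV[R]_k := [set u | (dotv u x)%:E = support_fun P u].

Definition poly_faces (k : nat) (P : set 'rV[R]_k) : set (set 'rV[R]_k) :=
  [set G | exists (c : 'rV[R]_k) (c0 : R),
     (forall x, P x -> dotv c x <= c0) /\
     G = [set x | P x /\ dotv c x = c0] /\ G !=set0].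

Definition aff_hull (k : nat) (G : set 'rV[R]_k) : set 'rV[R]_k :=
  [set z | exists (s : seq ('rV[R]_k * R)),
     [/\ (forall p, p \in s -> G p.1),
         \sum_(p <- s) p.2 = 1 &
         z = \sum_(p <- s) p.2 *: p.1]].

Definition relint (k : nat) (G : set 'rV[R]_k) : set 'rV[R]_k :=
  [set x | G x /\ exists2 N, nbhs x N & N `&` aff_hull G `<=` G].

Definition normal_fan (k : nat) (P : set 'rV[R]_k) : set (set 'rV[R]_k) :=
  [set C | exists2 G, poly_faces P G &
     exists2 x, relint G x & C = normal_cone P x].

Definition normally_equiv_poly (k : nat) (P Q : set 'rV[R]_k) : Prop :=
  normal_fan P = normal_fan Q.

Definition normally_equiv_arr (k : nat) (FA FB : set (set 'rV[R]_k)) : Prop :=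
  exists Psi : set 'rV[R]_k -> set 'rV[R]_k,
    [/\ (forall F, FA F -> FB (Psi F)),
        (forall F G, FA F -> FA G -> Psi F = Psi G -> F = G),
        (forall G', FB G' -> exists2 F, FA F & Psi F = G'),
        (forall F G, FA F -> FA G -> F `<=` G -> Psi F `<=` Psi G) &
        (forall F, FA F -> normally_equiv_poly F (Psi F))].

Variables (n m : nat) (u : 'I_m -> 'rV[R]_n).

Definition circuit (C : {set 'I_m}) : Prop :=
  ~~ free [seq u i | i in C] /\
  (forall D : {set 'I_m}, D \proper C -> free [seq u i | i in D]).

Definition circuit_vectors (c : {set 'I_m} -> 'rV[R]_m) : Prop :=
  forall C, circuit C ->
    \sum_(i < m) c C 0 i *: u i = 0 /\ (forall i, (c C 0 i != 0) = (i \in C)).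

Definition derived_faces (c : {set 'I_m} -> 'rV[R]_m) :=
  arr_faces (@circuit) c (fun _ => 0).
Definition derived_relint (c : {set 'I_m} -> 'rV[R]_m) (F : set 'rV[R]_m) :=
  arr_relint (@circuit) c (fun _ => 0) F.

Definition transl_faces (a : 'rV[R]_m) :=
  arr_faces [set: 'I_m] u (fun i => a 0 i).

(* coning cA_a in R^(n+1): points (x, x_{n+1}) = row_mx x (x_{n+1}) *)
Definition cone_normal (a : 'rV[R]_m) (i : option 'I_m) : 'rV[R]_(n + 1) :=
  match i with
  | Some j => row_mx (u j) (const_mx (a 0 j) : 'rV[R]_1)
  | None => row_mx 0 (const_mx 1 : 'rV[R]_1)
  end.
Definition cone_faces (a : 'rV[R]_m) :=
  arr_faces [set: option 'I_m] (cone_normal a) (fun _ => 0).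

Definition lift_faces (a : 'rV[R]_m) :=
  arr_faces [set: 'I_m] (fun i => row_mx (u i) (const_mx (a 0 i) : 'rV[R]_1))
    (fun _ => 0).

End Defs.

(* Faces of an arrangement are the closures of its sign classes, so the face
   poset, and the normal cone of each face, are determined by the set of
   realizable sign vectors; it therefore suffices that [A_a] and [A_b] realize
   the same sign vectors.  By Motzkin's transposition theorem (from Farkas'
   lemma) a sign vector [s] is not realized by [A_b] exactly when some linear
   dependency [l] of the [u_i], sign-compatible with [s], has
   [sg (sum_i l_i b_i) <> - sg (sum_i l_i s_i)].  Conformal elimination lets
   such a certificate be taken supported on a circuit, i.e. a multiple of some
   [c^C].  As [a] and [b] lie in the same open face of the derived arrangement,
   [<c^C, a>] and [<c^C, b>] have the same sign, so the certificate also rules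
   out [s] for [A_a].  Conings and elementary lifts reduce to this by
   homogenization, since [-a] and [-b] also lie in a common open face. *)

From HB Require Import structures.
From mathcomp Require Import all_boot all_order all_algebra.
From mathcomp Require Import all_classical all_reals all_analysis.
From mathcomp Require Import ring lra.

Set Implicit Arguments.
Unset Strict Implicit.
Unset Printing Implicit Defensive.

Import Order.TTheory GRing.Theory Num.Theory.
Import numFieldNormedType.Exports.
Local Open Scope classical_set_scope.
Local Open Scope ring_scope.

Section Farkas.
Variables (R : realFieldType) (V : lmodType R).

Lemma linear_ge0_eq0 (g : V -> R) : linear_for *%R g -> (forall y, 0 <= g y) ->
  forall y, g y = 0.
Proof.
move=> lin_g g_ge0 y; apply/eqP; rewrite eq_le g_ge0 andbT -oppr_ge0.
by have := g_ge0 (- y); rewrite -scaleN1r (scalable_linear lin_g) /= mulN1r.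
Qed.

Lemma farkas (I : eqType) (r : seq I) (f : I -> V -> R) (g : V -> R) :
  uniq r -> (forall i, linear_for *%R (f i)) -> linear_for *%R g ->
  ~ (exists y, (forall i, i \in r -> 0 <= f i y) /\ g y < 0) ->
  exists2 mu : I -> R, (forall i, 0 <= mu i) &
    forall y, g y = \sum_(i <- r) mu i * f i y.
Proof.
elim: r f g => [|h r IH] f g uniq_r lin_f lin_g infeas.
  exists (fun=> 0) => // y; rewrite big_nil; apply: linear_ge0_eq0 => // z.
  by rewrite leNgt; apply/negP => gz; apply: infeas; exists z.
move: uniq_r => /= /andP[h_r uniq_r].
have [[y0 [y0_r gy0]]|feas] :=
    pselect (exists y, (forall i, i \in r -> 0 <= f i y) /\ g y < 0); last first.
  have [mu mu_ge0 g_mu] := IH f g uniq_r lin_f lin_g feas.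
  exists (fun i => if i == h then 0 else mu i) => [i|y]; first by case: eqP.
  rewrite big_cons eqxx mul0r add0r g_mu; apply: eq_big_seq => i i_r.
  by case: eqP i_r => // ->; rewrite (negPf h_r).
have fh_lt0 : f h y0 < 0.
  rewrite ltNge; apply/negP => fh_ge0; apply: infeas; exists y0; split=> // i.
  by rewrite inE => /orP[/eqP -> //|/y0_r].
(* Project out the direction [y0], on which [f h] is negative, and recurse on [r]. *)
pose proj (phi : V -> R) z := phi z - phi y0 / f h y0 * f h z.
have lin_proj phi : linear_for *%R phi -> linear_for *%R (proj phi).
  by move=> lin_phi c y z; rewrite /proj lin_phi (lin_f h); ring.
pose back z := z - f h z / f h y0 *: y0.
have proj_back phi z : linear_for *%R phi -> phi (back z) = proj phi z.
  move=> lin_phi; rewrite /back (zmod_morphism_linear lin_phi).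
  by rewrite (scalable_linear lin_phi) /proj /=; ring.
have [mu mu_ge0 g_mu] : exists2 mu : I -> R, (forall i, 0 <= mu i) &
    forall z, proj g z = \sum_(i <- r) mu i * proj (f i) z.
  apply: IH => //; [by move=> i; exact: lin_proj|exact: lin_proj|].
  move=> [z [z_r gz]]; apply: infeas; exists (back z); split; last by rewrite proj_back.
  move=> i; rewrite inE => /orP[/eqP ->|/z_r]; last by rewrite proj_back.
  by rewrite proj_back // /proj divff ?mul1r ?subrr // lt_eqF.
pose muh := (g y0 - \sum_(i <- r) mu i * f i y0) / f h y0.
exists (fun i => if i == h then muh else mu i) => [i|z].
  case: eqP => // _; rewrite ler_ndivlMr // mul0r subr_le0.
  apply: le_trans (ltW gy0) _; rewrite big_seq sumr_ge0 // => j j_r.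
  by rewrite mulr_ge0 ?y0_r.
rewrite big_cons eqxx (eq_big_seq (fun i => mu i * f i z)); last first.
  by move=> i i_r; case: eqP i_r => // ->; rewrite (negPf h_r).
have expand : \sum_(i <- r) mu i * proj (f i) z =
    \sum_(i <- r) mu i * f i z - (\sum_(i <- r) mu i * f i y0) / f h y0 * f h z.
  by rewrite !mulr_suml -sumrB; apply: eq_bigr => i _; rewrite /proj; ring.
rewrite -[g z](subrK (g y0 / f h y0 * f h z)) -/(proj g z) g_mu expand /muh.
by field; rewrite lt_eqF.
Qed.

End Farkas.

Section DotProduct.
Variables (R : realType) (k : nat).
Implicit Types (v w x y : 'rV[R]_k).

Lemma dotvDl v w x : dotv (v + w) x = dotv v x + dotv w x.
Proof. by rewrite /dotv -big_split; apply: eq_bigr => i _; rewrite mxE mulrDl. Qed.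

Lemma dotvDr w x y : dotv w (x + y) = dotv w x + dotv w y.
Proof. by rewrite /dotv -big_split; apply: eq_bigr => i _; rewrite mxE mulrDr. Qed.

Lemma dotvZl c w x : dotv (c *: w) x = c * dotv w x.
Proof. by rewrite /dotv mulr_sumr; apply: eq_bigr => i _; rewrite mxE mulrA. Qed.

Lemma dotvZr c w x : dotv w (c *: x) = c * dotv w x.
Proof. by rewrite /dotv mulr_sumr; apply: eq_bigr => i _; rewrite mxE mulrCA. Qed.

Lemma dotv0l x : dotv 0 x = 0.
Proof. by rewrite -(scale0r 0) dotvZl mul0r. Qed.

Lemma dotv0r w : dotv w 0 = 0.
Proof. by rewrite -(scale0r 0) dotvZr mul0r. Qed.

Lemma dotvNl w x : dotv (- w) x = - dotv w x.
Proof. by rewrite -scaleN1r dotvZl mulN1r. Qed.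

Lemma dotvNr w x : dotv w (- x) = - dotv w x.
Proof. by rewrite -scaleN1r dotvZr mulN1r. Qed.

Lemma dotvBr w x y : dotv w (x - y) = dotv w x - dotv w y.
Proof. by rewrite dotvDr dotvNr. Qed.

Lemma dotv_suml (I : Type) (r : seq I) (P : pred I) (F : I -> 'rV[R]_k) x :
  dotv (\sum_(i <- r | P i) F i) x = \sum_(i <- r | P i) dotv (F i) x.
Proof. exact: (big_morph _ (fun v w => dotvDl v w x) (dotv0l x)). Qed.

Lemma dotv_sumr (I : Type) (r : seq I) (P : pred I) (F : I -> 'rV[R]_k) w :
  dotv w (\sum_(i <- r | P i) F i) = \sum_(i <- r | P i) dotv w (F i).
Proof. exact: (big_morph _ (dotvDr w) (dotv0r w)). Qed.

Lemma dotvv_eq0 v : (dotv v v == 0) = (v == 0).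
Proof.
apply/idP/eqP => [|->]; last by rewrite dotv0r.
rewrite /dotv psumr_eq0 => [/allP v0|i _]; last by rewrite -expr2 sqr_ge0.
apply/matrixP => i j; rewrite mxE ord1.
by have /implyP/(_ isT) := v0 j (mem_index_enum j); rewrite mulf_eq0 orbb => /eqP.
Qed.

Lemma continuous_dotv w : continuous (dotv w).
Proof.
have -> : dotv w = \sum_(i < k) (fun x : 'rV[R]_k => w 0 i * x 0 i).
  by apply/funext => x; rewrite /dotv fct_sumE.
apply: (big_ind (fun f : 'rV[R]_k -> R => continuous f)) => [|f g cf cg|i _].
- exact: cst_continuous.
- by move=> x; exact: continuousD (cf x) (cg x).
- by move=> x; apply: continuousM; [exact: cst_continuous|exact: coord_continuous].
Qed.

End DotProduct.

Lemma dotv_row_mx (R : realType) (k1 k2 : nat) (w1 x1 : 'rV[R]_k1) (w2 x2 : 'rV[R]_k2) :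
  dotv (row_mx w1 w2) (row_mx x1 x2) = dotv w1 x1 + dotv w2 x2.
Proof.
by rewrite /dotv big_split_ord; congr (_ + _); apply: eq_bigr => i _;
  rewrite ?row_mxEl ?row_mxEr.
Qed.

Lemma sg_convex_comb (R : realFieldType) (a b t : R) : 0 < t -> t < 1 ->
  Num.sg a = 0 \/ Num.sg a = Num.sg b -> Num.sg ((1 - t) * a + t * b) = Num.sg b.
Proof.
move=> t_gt0 t_lt1 sg_a; have t1_gt0 : 0 < 1 - t by rewrite subr_gt0.
have [b_lt0|b_gt0|b0] := ltgtP b 0.
- have a_le0 : a <= 0 by rewrite -sgr_le0; case: sg_a => ->; rewrite ?ltr0_sg.
  have : (1 - t) * a <= 0 by rewrite pmulr_rle0.
  have : t * b < 0 by rewrite pmulr_rlt0.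
  by move=> ? ?; rewrite (ltr0_sg b_lt0) ltr0_sg //; lra.
- have a_ge0 : 0 <= a by rewrite -sgr_ge0; case: sg_a => ->; rewrite ?gtr0_sg.
  have : 0 <= (1 - t) * a by rewrite pmulr_rge0.
  have : 0 < t * b by rewrite pmulr_rgt0.
  by move=> ? ?; rewrite (gtr0_sg b_gt0) gtr0_sg //; lra.
- rewrite b0 sgr0 in sg_a *; have /eqP : Num.sg a = 0 by case: sg_a.
  by rewrite sgr_eq0 => /eqP ->; rewrite !mulr0 addr0 sgr0.
Qed.

Lemma nbhs_segment (R : realType) (k : nat) (x : 'rV[R]_k) (S : set 'rV[R]_k) : nbhs x S ->
  forall v, exists t, [/\ 0 < t, t < 1 & S (x + t *: v)].
Proof.
move=> /nbhs_ballP[e /= e_gt0 xeS] v.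
pose t := e / (e + 2 * (`|v| + 1)).
have den_gt0 : 0 < e + 2 * (`|v| + 1) by rewrite addr_gt0 // mulr_gt0 // ltr_pwDr.
have t_gt0 : 0 < t by rewrite divr_gt0.
exists t; split => //; first by rewrite ltr_pdivrMr // mul1r ltr_pwDr // mulr_gt0 // ltr_pwDr.
apply: xeS; rewrite -ball_normE /= opprD addNKr normrN normrZ gtr0_norm //.
by rewrite /t mulrAC ltr_pdivrMr // ltr_pM2l //; lra.
Qed.

Lemma nbhs_sg_eq (R : realType) (r : R) : r != 0 -> \forall s \near r, Num.sg s = Num.sg r.
Proof.
case: ltgtP => // [r_lt0|r_gt0] _.
  move: (@open_nbhs_nbhs _ r [set x : R | x < 0]) => /(_ (conj (@open_lt _ 0) r_lt0)).
  by apply: filterS => s /= s_lt0; rewrite !ltr0_sg.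
move: (@open_nbhs_nbhs _ r [set x : R | 0 < x]) => /(_ (conj (@open_gt _ 0) r_gt0)).
by apply: filterS => s /= s_gt0; rewrite !gtr0_sg.
Qed.

Section ArrangementFaces.
Variables (R : realType) (k : nat) (I : Type) (A : set I).
Variables (w : I -> 'rV[R]_k) (d : I -> R).

Definition sign_vector (x : 'rV[R]_k) (i : I) : R := Num.sg (dotv (w i) x - d i).

Definition sign_le (s t : I -> R) := forall i, A i -> s i = 0 \/ s i = t i.

Definition closed_face (x : 'rV[R]_k) : set 'rV[R]_k :=
  [set y | sign_le (sign_vector y) (sign_vector x)].

Lemma sign_le_refl s : sign_le s s.
Proof. by right. Qed.

Lemma sign_le_trans s t r : sign_le s t -> sign_le t r -> sign_le s r.
Proof. by move=> st tr i Ai; case: (st i Ai) => [|->]; [left|exact: tr]. Qed.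

Lemma sign_le_anti s t : sign_le s t -> sign_le t s -> forall i, A i -> s i = t i.
Proof. by move=> st ts i Ai; case: (st i Ai) => // s0; case: (ts i Ai) => // ->. Qed.

Lemma continuous_form i : continuous (fun x => dotv (w i) x - d i).
Proof.
by move=> x; apply: (@continuousB _ _ _ (dotv (w i)) (cst (d i)));
  [exact: continuous_dotv|exact: cst_continuous].
Qed.

Lemma nbhs_sign_vector x i : dotv (w i) x - d i != 0 ->
  \forall y \near x, sign_vector y i = sign_vector x i.
Proof. by move=> /nbhs_sg_eq; apply: continuous_form. Qed.

Lemma sign_vector_segment x y t i : 0 < t -> t < 1 ->
  sign_vector y i = 0 \/ sign_vector y i = sign_vector x i ->
  sign_vector (y + t *: (x - y)) i = sign_vector x i.
Proof.
move=> t_gt0 t_lt1; rewrite /sign_vector dotvDr dotvZr dotvBr.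
rewrite (_ : _ + _ - _ = (1 - t) * (dotv (w i) y - d i) + t * (dotv (w i) x - d i)).
  exact: sg_convex_comb.
by ring.
Qed.

Lemma closure_open_face x : closure [set y | same_sign A w d x y] = closed_face x.
Proof.
apply/seteqP; split => y.
  move=> y_cl i Ai; have [|y_i] := eqVneq (sign_vector y i) 0; first by left.
  have fy : dotv (w i) y - d i != 0 by rewrite -sgr_eq0.
  have [z [xz /= zy]] := y_cl _ (nbhs_sign_vector fy).
  by right; rewrite -zy; exact/esym/xz.
move=> y_x B /nbhs_segment/(_ (x - y))[t [t_gt0 t_lt1 B_t]].
exists (y + t *: (x - y)); split => // i Ai.
by apply/esym/sign_vector_segment => //; exact: y_x.
Qed.

Lemma arr_facesP F : arr_faces A w d F <-> exists x, F = closed_face x.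
Proof.
split => [|[x ->]]; first by case=> O [x ->] <-; exists x; rewrite closure_open_face.
by exists [set y | same_sign A w d x y]; [exists x|rewrite closure_open_face].
Qed.

Lemma closed_face_subP x y :
  closed_face x `<=` closed_face y <-> sign_le (sign_vector x) (sign_vector y).
Proof.
split => [/(_ x (sign_le_refl _)) //|xy z zx]; exact: sign_le_trans zx xy.
Qed.

Lemma closed_face_eqP x y :
  closed_face x = closed_face y <-> forall i, A i -> sign_vector x i = sign_vector y i.
Proof.
split => [xy|xy]; first by apply: sign_le_anti; apply/closed_face_subP; rewrite xy.
by apply/seteqP; split; apply/closed_face_subP => i Ai; right; [exact: xy|exact/esym/xy].
Qed.

Lemma arr_relint_same_sign F x y :
  arr_relint A w d F x -> arr_relint A w d F y -> same_sign A w d x y.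
Proof.
move=> [_ [x' ->] [Fx x'x]] [_ [y' ->] [Fy y'y]].
have /closed_face_eqP x'y' : closed_face x' = closed_face y'.
  by rewrite -!closure_open_face Fx Fy.
by move=> i Ai; rewrite -(x'x i Ai) -(y'y i Ai); exact: x'y'.
Qed.

End ArrangementFaces.

Definition sign_vectors_sub (R : realType) (I : Type) (A : set I) (k1 k2 : nat)
    (w1 : I -> 'rV[R]_k1) (d1 : I -> R) (w2 : I -> 'rV[R]_k2) (d2 : I -> R) :=
  forall x, exists x', forall i, A i -> sign_vector w1 d1 x i = sign_vector w2 d2 x' i.

Section FaceCorrespondence.
Variables (R : realType) (I : Type) (A : set I) (k1 k2 : nat).
Variables (w1 : I -> 'rV[R]_k1) (d1 : I -> R) (w2 : I -> 'rV[R]_k2) (d2 : I -> R).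
Hypotheses (sub12 : sign_vectors_sub A w1 d1 w2 d2) (sub21 : sign_vectors_sub A w2 d2 w1 d1).

Definition face_map (F : set 'rV[R]_k1) : set 'rV[R]_k2 :=
  [set y | exists x x', [/\ F = closed_face A w1 d1 x,
    forall i, A i -> sign_vector w1 d1 x i = sign_vector w2 d2 x' i &
    closed_face A w2 d2 x' y]].

Lemma face_map_closed_face x x' :
  (forall i, A i -> sign_vector w1 d1 x i = sign_vector w2 d2 x' i) ->
  face_map (closed_face A w1 d1 x) = closed_face A w2 d2 x'.
Proof.
move=> xx'; apply/seteqP; split => [y [z [z' [/closed_face_eqP xz zz' z'y]]]|y x'y].
  suff -> : closed_face A w2 d2 x' = closed_face A w2 d2 z' by [].
  by apply/closed_face_eqP => i Ai; rewrite -xx' // xz // zz'.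
by exists x, x'.
Qed.

Lemma face_map_image x : exists x',
  face_map (closed_face A w1 d1 x) = closed_face A w2 d2 x' /\
  forall i, A i -> sign_vector w1 d1 x i = sign_vector w2 d2 x' i.
Proof. by have [x' xx'] := sub12 x; exists x'; rewrite (face_map_closed_face xx'). Qed.

Lemma face_map_iso :
  [/\ forall F, arr_faces A w1 d1 F -> arr_faces A w2 d2 (face_map F),
      forall F G, arr_faces A w1 d1 F -> arr_faces A w1 d1 G ->
        face_map F = face_map G -> F = G,
      forall G', arr_faces A w2 d2 G' -> exists2 F, arr_faces A w1 d1 F & face_map F = G' &
      forall F G, arr_faces A w1 d1 F -> arr_faces A w1 d1 G ->
        (F `<=` G <-> face_map F `<=` face_map G)].
Proof.
split.
- move=> F /arr_facesP[x ->]; have [x' [-> _]] := face_map_image x.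
  by apply/arr_facesP; exists x'.
- move=> F G /arr_facesP[x ->] /arr_facesP[y ->].
  have [x' [-> xx']] := face_map_image x; have [y' [-> yy']] := face_map_image y.
  by move/closed_face_eqP => x'y'; apply/closed_face_eqP => i Ai; rewrite xx' // yy' // x'y'.
- move=> G' /arr_facesP[x' ->]; have [x x'x] := sub21 x'.
  exists (closed_face A w1 d1 x); first by apply/arr_facesP; exists x.
  by apply: face_map_closed_face => i Ai; rewrite x'x.
- move=> F G /arr_facesP[x ->] /arr_facesP[y ->].
  have [x' [-> xx']] := face_map_image x; have [y' [-> yy']] := face_map_image y.
  rewrite !closed_face_subP.
  by split => le i Ai; [rewrite -xx' // -yy' //|rewrite xx' // yy' //]; exact: le.
Qed.

Lemma poset_iso_of_sign_vectors : poset_iso (arr_faces A w1 d1) (arr_faces A w2 d2).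
Proof. by have [? ? ? ?] := face_map_iso; exists face_map. Qed.

End FaceCorrespondence.

Lemma sg_eq_of_mul_ge0 (R : realDomainType) (s y : R) : s != 0 -> y != 0 ->
  0 <= Num.sg s * y -> Num.sg y = Num.sg s.
Proof.
case: sgrP => // [s_gt0|s_lt0] _ y0; rewrite ?mul1r ?mulN1r ?oppr_ge0 => y_s.
  by rewrite gtr0_sg // lt_def y0.
by rewrite ltr0_sg // lt_def eq_sym y0.
Qed.

Lemma normal_coneP (R : realType) (k : nat) (P : set 'rV[R]_k) (x c : 'rV[R]_k) : P x ->
  normal_cone P x c <-> forall z, P z -> dotv c z <= dotv c x.
Proof.
move=> Px; rewrite /normal_cone /support_fun /=; split.
  by move=> cx z Pz; rewrite -lee_fin cx; apply: ereal_sup_ubound; exists z.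
move=> c_max; apply/eqP; rewrite eq_le; apply/andP; split.
  by apply: ereal_sup_ubound; exists x.
by apply: ge_ereal_sup => _ [z Pz <-]; rewrite lee_fin c_max.
Qed.

Section NormalFan.
Variables (R : realType) (k : nat) (I : finType) (w : I -> 'rV[R]_k) (d : I -> R).

Definition feasible_dir (s t : I -> R) (v : 'rV[R]_k) := forall i,
  (s i = 0 -> dotv (w i) v = 0) /\ (t i = 0 -> 0 <= s i * dotv (w i) v).

Definition sign_normal_cone (s t : I -> R) : set 'rV[R]_k :=
  [set c | forall v, feasible_dir s t v -> dotv c v <= 0].

Lemma nbhs_sign_stable x : \forall y \near x,
  forall i, dotv (w i) x - d i != 0 -> sign_vector w d y i = sign_vector w d x i.
Proof.
apply: (filter_forall (nbhs_filter x)) => i /=.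
have [fx0|fx] := eqVneq (dotv (w i) x - d i) 0.
  by apply: nearW => y /negP[]; apply/eqP.
by apply: filterS (nbhs_sign_vector fx) => y yx.
Qed.

Lemma form_affine_comb (s : seq ('rV[R]_k * R)) i : \sum_(p <- s) p.2 = 1 ->
  dotv (w i) (\sum_(p <- s) p.2 *: p.1) - d i = \sum_(p <- s) p.2 * (dotv (w i) p.1 - d i).
Proof.
move=> s1; rewrite dotv_sumr.
have {1}-> : d i = \sum_(p <- s) p.2 * d i by rewrite -mulr_suml s1 mul1r.
by rewrite -sumrB; apply: eq_bigr => p _; rewrite dotvZr mulrBr.
Qed.

Variable x0 : 'rV[R]_k.
Local Notation P := (closed_face setT w d x0).
Local Notation sig := (sign_vector w d x0).

Lemma closed_face_form_ge0 z i : P z -> 0 <= sig i * (dotv (w i) z - d i).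
Proof.
move/(_ i Logic.I) => [/eqP|<-]; first by rewrite sgr_eq0 => /eqP ->; rewrite mulr0.
by rewrite -normrEsg.
Qed.

Lemma closed_face_form_eq0 z i : P z -> sig i = 0 -> dotv (w i) z - d i = 0.
Proof.
move=> /(_ i Logic.I) Pz s0; have : sign_vector w d z i = 0 by case: Pz => ->.
by move/eqP; rewrite sgr_eq0 => /eqP.
Qed.

Lemma closed_face_feasible_dir x v : P x -> feasible_dir sig (sign_vector w d x) v ->
  exists2 t, 0 < t & P (x + t *: v).
Proof.
move=> Px v_x; have [t [t_gt0 _ x_stable]] := nbhs_segment (nbhs_sign_stable x) v.
exists t => // i _.
have [fx0|fx] := eqVneq (dotv (w i) x - d i) 0; last by rewrite (x_stable i fx); apply: Px.
have [v_s0 v_ge0] := v_x i.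
rewrite /sign_vector dotvDr dotvZr addrAC fx0 add0r sgrM gtr0_sg // mul1r.
have [s0|s_neq0] := eqVneq (sig i) 0; first by left; rewrite v_s0 // sgr0.
have [->|wv] := eqVneq (dotv (w i) v) 0; first by left; rewrite sgr0.
right; apply: sg_eq_of_mul_ge0 => //; first by rewrite -sgr_eq0.
by apply: v_ge0; rewrite /sign_vector fx0 sgr0.
Qed.

Lemma normal_cone_closed_face x :
  P x -> normal_cone P x = sign_normal_cone sig (sign_vector w d x).
Proof.
move=> Px; apply/seteqP; split => c.
  move=> /(normal_coneP _ Px) c_max v /(closed_face_feasible_dir Px)[t t_gt0 Pxtv].
  by have := c_max _ Pxtv; rewrite dotvDr dotvZr gerDl pmulr_rle0.
move=> c_cone; apply/(normal_coneP _ Px) => z Pz.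
rewrite -subr_le0 -dotvBr; apply: c_cone => i; split => [s0|/eqP].
  have := closed_face_form_eq0 Pz s0; have := closed_face_form_eq0 Px s0.
  by rewrite dotvBr; lra.
rewrite sgr_eq0 => /eqP fx0.
rewrite dotvBr (_ : dotv (w i) x = d i); first exact: closed_face_form_ge0.
by apply/eqP; rewrite -subr_eq0 fx0.
Qed.

Definition minimal_face x : set 'rV[R]_k :=
  [set z | P z /\ forall i, dotv (w i) x - d i = 0 -> dotv (w i) z - d i = 0].

Lemma minimal_face_poly_face x : P x -> poly_faces P (minimal_face x).
Proof.
move=> Px; pose J i := dotv (w i) x - d i == 0.
pose c := - \sum_(i | J i) sig i *: w i; pose c0 := - \sum_(i | J i) sig i * d i.
have c_form z : dotv c z - c0 = - \sum_(i | J i) sig i * (dotv (w i) z - d i).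
  rewrite (eq_bigr (fun i => dotv (sig i *: w i) z - sig i * d i)) => [|i _].
    by rewrite sumrB -dotv_suml /c /c0 dotvNl; ring.
  by rewrite dotvZl mulrBr.
exists c, c0; split.
  move=> z Pz; rewrite -subr_le0 c_form oppr_le0 sumr_ge0 // => i _.
  exact: closed_face_form_ge0.
split; last by exists x.
apply/seteqP; split => z [Pz z0]; split => //.
  by apply/eqP; rewrite -subr_eq0 c_form oppr_eq0 big1 // => i /eqP/z0 ->; rewrite mulr0.
move=> i fx0; move/eqP: z0; rewrite -subr_eq0 c_form oppr_eq0 psumr_eq0 => [/allP z0|j _].
  move: (z0 i (mem_index_enum i)); rewrite /J fx0 eqxx mulf_eq0 => /orP[/eqP|/eqP //].
  exact: closed_face_form_eq0.
exact: closed_face_form_ge0.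
Qed.

Lemma relint_minimal_face x : P x -> relint (minimal_face x) x.
Proof.
move=> Px; split=> //; exists [set y | forall i, dotv (w i) x - d i != 0 ->
  sign_vector w d y i = sign_vector w d x i]; first exact: nbhs_sign_stable.
move=> z [z_stable [s [s_face s1 z_s]]]; rewrite {z}z_s in z_stable *.
split => [i _|i fx0]; last first.
  rewrite form_affine_comb // big_seq big1 // => p /s_face[_ /(_ i fx0) ->].
  exact: mulr0.
have [fx0|fx] := eqVneq (dotv (w i) x - d i) 0; last by rewrite z_stable //; exact: Px.
left; rewrite /sign_vector form_affine_comb // big_seq big1 ?sgr0 // => p.
by move=> /s_face[_ /(_ i fx0) ->]; rewrite mulr0.
Qed.

Lemma normal_fan_closed_face :
  normal_fan P = [set sign_normal_cone sig (sign_vector w d x) | x in P].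
Proof.
apply/seteqP; split => C.
  move=> [G [c [c0 [_ [-> _]]]] [x [[Px _] _] ->]].
  by exists x => //; rewrite normal_cone_closed_face.
move=> [x Px <-]; exists (minimal_face x); first exact: minimal_face_poly_face.
by exists x; [exact: relint_minimal_face|rewrite normal_cone_closed_face].
Qed.

End NormalFan.

Section NormalEquivalence.
Variables (R : realType) (k : nat) (I : finType) (w : I -> 'rV[R]_k) (d1 d2 : I -> R).
Hypotheses (sub12 : sign_vectors_sub setT w d1 w d2) (sub21 : sign_vectors_sub setT w d2 w d1).

Lemma normal_fan_sign_vectors x1 x2 :
  (forall i, [set: I] i -> sign_vector w d1 x1 i = sign_vector w d2 x2 i) ->
  normal_fan (closed_face setT w d1 x1) = normal_fan (closed_face setT w d2 x2).
Proof.
move=> x12; rewrite !normal_fan_closed_face.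
have -> : sign_vector w d1 x1 = sign_vector w d2 x2 by apply/funext => i; exact: x12.
apply/seteqP; split => _ [y y_face <-].
  have [y' yy'] := sub12 y; exists y'.
    by move=> i _; rewrite -yy' // -x12 //; exact: y_face.
  by congr sign_normal_cone; apply/funext => i; rewrite yy'.
have [y' yy'] := sub21 y; exists y'.
  by move=> i _; rewrite -yy' // x12 //; exact: y_face.
by congr sign_normal_cone; apply/funext => i; rewrite yy'.
Qed.

Lemma normally_equiv_of_sign_vectors :
  normally_equiv_arr (arr_faces setT w d1) (arr_faces setT w d2).
Proof.
have [F_face F_inj F_surj F_mono] := face_map_iso sub12 sub21.
exists (face_map setT w d1 w d2); split => // [F G FF FG|F /arr_facesP[x ->]].
  by move/(F_mono F G FF FG).
have [x' xx'] := sub12 x; rewrite (face_map_closed_face xx').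
exact: normal_fan_sign_vectors.
Qed.

End NormalEquivalence.

Section Conformal.
Variables (R : realFieldType) (I : finType).
Implicit Types (g l al be : I -> R).

Definition conformal g l := forall i, (l i = 0 -> g i = 0) /\ 0 <= g i * l i.

Definition supp l : {set I} := [set i | l i != 0].

Lemma conformal_refl l : conformal l l.
Proof. by move=> i; split => //; rewrite -expr2 sqr_ge0. Qed.

Lemma conformal_sign g l (s : I -> R) : conformal g l ->
  (forall i, 0 <= l i * s i) -> forall i, 0 <= g i * s i.
Proof.
move=> gl ls i; have [gl0 gl_ge0] := gl i; have [/gl0 ->|l_neq0] := eqVneq (l i) 0.
  by rewrite mul0r.
rewrite -(pmulr_lge0 _ (_ : 0 < l i * l i)); last by rewrite -expr2 exprn_even_gt0.
by rewrite mulrACA [s i * _]mulrC mulr_ge0.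
Qed.

Lemma conformal_trans g h l : conformal g h -> conformal h l -> conformal g l.
Proof.
move=> gh hl i; have [hl0 hl_ge0] := hl i; split; first by move/hl0; exact: (gh i).1.
exact: conformal_sign gh (fun i => (hl i).2) i.
Qed.

Lemma conformal_elimination al be i0 : 0 < al i0 * be i0 ->
  (forall i, al i = 0 -> be i = 0) ->
  exists2 t, 0 < t & conformal (fun i => al i - t * be i) al /\
    (#|supp (fun i => al i - t * be i)%R| < #|supp al|)%N.
Proof.
move=> al_be0 supp_be.
have [j al_be_j j_min] :=
  @arg_minP _ _ _ i0 (fun i => 0 < al i * be i) (fun i => al i / be i) al_be0.
have [be_j al_j] : be j != 0 /\ al j != 0.
  by split; apply: contraTneq al_be_j => ->; rewrite ?mulr0 ?mul0r ltxx.
set t := al j / be j.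
have t_gt0 : 0 < t.
  by rewrite -(pmulr_lgt0 _ (_ : 0 < be j * be j)) ?mulrA ?divfK // -expr2 exprn_even_gt0.
have conf : conformal (fun i => al i - t * be i) al.
  move=> i; split => [al0|]; first by rewrite al0 supp_be // mulr0 subrr.
  rewrite mulrBl subr_ge0 -mulrA; have [al_be_i|] := boolP (0 < al i * be i); last first.
    rewrite -leNgt => al_be_le0; rewrite [be i * _]mulrC.
    by apply: (@le_trans _ _ 0); [rewrite pmulr_rle0|rewrite -expr2 sqr_ge0].
  have be_i : be i != 0 by apply: contraTneq al_be_i => ->; rewrite mulr0 ltxx.
  have t_le := j_min i al_be_i; rewrite [be i * _]mulrC.
  rewrite (le_trans (ler_wpM2r (ltW al_be_i) t_le)) //.
  by rewrite (_ : al i / be i * (al i * be i) = al i * al i) //; field.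
exists t => //; split => //.
rewrite proper_card // finset.properEneq; apply/andP; split.
  by apply/eqP => /setP/(_ j); rewrite !inE al_j /t divfK // subrr eqxx.
by apply/fintype.subsetP => i; rewrite !inE; apply: contra => /eqP al0; rewrite ((conf i).1 al0).
Qed.

End Conformal.

Section Circuits.
Variables (R : realType) (n m : nat) (u : 'I_m -> 'rV[R]_n).

Definition dependency (l : 'I_m -> R) := \sum_i l i *: u i = 0.

Lemma dependency_sub l1 l2 t : dependency l1 -> dependency l2 ->
  dependency (fun i => l1 i - t * l2 i).
Proof.
rewrite /dependency => dep1 dep2; under eq_bigr do rewrite scalerBl -scalerA.
by rewrite sumrB -scaler_sumr dep1 dep2 scaler0 subr0.
Qed.

Lemma dependency_scale l t : dependency l -> dependency (fun i => t * l i).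
Proof.
rewrite /dependency => dep_l; under eq_bigr do rewrite -scalerA.
by rewrite -scaler_sumr dep_l scaler0.
Qed.

Lemma dependency_not_free l i0 : dependency l -> l i0 != 0 ->
  ~~ free [seq u i | i in supp l].
Proof.
move=> dep_l l_i0; apply/negP; set e := enum (supp l).
have e_i0 : i0 \in e by rewrite mem_enum inE.
rewrite /image_mem -/e -[map u e]in_tupleE => /freeP/(_ (fun j => l (nth i0 e j))) l_e0.
move/eqP: l_i0; apply; rewrite -[in LHS](nth_index i0 e_i0).
have idx : (index i0 e < size (map u e))%N by rewrite size_map index_mem.
apply: (l_e0 _ (Ordinal idx)).
change (\sum_(j < size (map u e)) l (nth i0 e j) *: (map u e)`_j = 0).
rewrite size_map -(big_mkord xpredT (fun j => l (nth i0 e j) *: (map u e)`_j)).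
rewrite (eq_big_nat _ _ (F2 := fun j => l (nth i0 e j) *: u (nth i0 e j))) => [|j /andP[_ j_lt]].
  rewrite -(big_nth i0 xpredT (fun i => l i *: u i)) big_enum big_mkcond /= -[RHS]dep_l.
  by apply: eq_bigr => i _; rewrite inE; case: eqP => // ->; rewrite scale0r.
by rewrite (nth_map i0).
Qed.

Lemma exists_circuit (D : {set 'I_m}) : ~~ free [seq u i | i in D] ->
  exists2 C : {set 'I_m}, C \subset D & circuit u C.
Proof.
move=> D_dep; have [C min_C CD] :=
  @minset_exists _ (fun E => ~~ free [seq u i | i in E]) D D_dep.
move/minsetP: min_C => [C_dep C_min].
exists C => //; split => // E /andP[EC /negP CE]; apply/negPn/negP => E_dep.
by apply: CE; rewrite (C_min E E_dep EC).
Qed.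

End Circuits.

Lemma sg_psumr_eq (R : realDomainType) (I : finType) (F G : I -> R) :
  (forall i, 0 <= F i) -> (forall i, 0 <= G i) -> (forall i, (F i == 0) = (G i == 0)) ->
  Num.sg (\sum_i F i) = Num.sg (\sum_i G i).
Proof.
move=> F_ge0 G_ge0 FG.
have sum_eq0 : (\sum_i F i == 0) = (\sum_i G i == 0).
  by rewrite !psumr_eq0 //; apply: eq_all => i; rewrite FG.
have [F0|F_neq0] := eqVneq (\sum_i F i) 0.
  by move: sum_eq0; rewrite F0 eqxx => /esym/eqP ->.
have G_neq0 : \sum_i G i != 0 by rewrite -sum_eq0.
by rewrite !gtr0_sg // lt_def ?F_neq0 ?G_neq0 sumr_ge0.
Qed.

Lemma sgrD_opp (R : realDomainType) (p1 p2 q1 q2 : R) : 0 <= p1 -> 0 <= p2 ->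
  Num.sg q1 = - Num.sg p1 -> Num.sg q2 = - Num.sg p2 ->
  Num.sg (q1 + q2) = - Num.sg (p1 + p2).
Proof.
have cases (p q : R) : 0 <= p -> Num.sg q = - Num.sg p -> (p = 0 /\ q = 0) \/ (0 < p /\ q < 0).
  rewrite le_eqVlt => /orP[/eqP <-|p_gt0]; rewrite ?sgr0 ?oppr0 ?(gtr0_sg p_gt0).
    by move/eqP; rewrite sgr_eq0 => /eqP ->; left.
  by move=> q_sg; right; rewrite -sgr_lt0 q_sg oppr_lt0 ltr01.
move=> p1_ge0 p2_ge0 /(cases _ _ p1_ge0) c1 /(cases _ _ p2_ge0) c2.
case: c1 c2 => [[-> ->]|[p1_gt0 q1_lt0]] [[-> ->]|[p2_gt0 q2_lt0]];
  rewrite ?addr0 ?add0r ?sgr0 ?oppr0 ?(gtr0_sg p1_gt0) ?(ltr0_sg q1_lt0) //.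
- by rewrite (gtr0_sg p2_gt0) (ltr0_sg q2_lt0).
- by rewrite ltr0_sg ?gtr0_sg //; lra.
Qed.

Section Obstructions.
Variables (R : realType) (n m : nat) (u : 'I_m -> 'rV[R]_n).
Implicit Types (l s a : 'I_m -> R).

Definition obstruction l s a :=
  [/\ dependency u l, forall i, 0 <= l i * s i &
      Num.sg (\sum_i l i * a i) != - Num.sg (\sum_i l i * s i)].

Lemma obstruction_infeasible l s a : obstruction l s a ->
  ~ exists x, forall i, sign_vector u a x i = s i.
Proof.
move=> [dep_l l_s /eqP sg_ne] [x x_s]; apply: sg_ne.
have sum_form : \sum_i l i * (dotv (u i) x - a i) = - \sum_i l i * a i.
  rewrite (eq_bigr (fun i => dotv (l i *: u i) x - l i * a i)) => [|i _].
    by rewrite sumrB -dotv_suml dep_l dotv0l sub0r.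
  by rewrite dotvZl mulrBr.
rewrite -[\sum_i l i * a i]opprK -sum_form sgrN; congr (- _).
have form_sg i : dotv (u i) x - a i = s i * `|dotv (u i) x - a i|.
  by rewrite -(x_s i) -numEsg.
apply: sg_psumr_eq => // i; rewrite form_sg mulrA; first by rewrite mulr_ge0.
rewrite mulf_eq0 normr_eq0 orb_idr // => /eqP fx0.
by rewrite -(x_s i) /sign_vector fx0 sgr0 mulr0.
Qed.

Lemma obstruction_neq0 l s a : obstruction l s a -> exists i, l i != 0.
Proof.
move=> [_ _]; apply: contraNP => l0.
have {}l0 i : l i = 0 by apply/eqP/negPn/negP => li; apply: l0; exists i.
by rewrite !big1 ?sgr0 ?oppr0 // => i _; rewrite l0 mul0r.
Qed.

Lemma obstruction_split l1 l2 s a : dependency u l1 -> dependency u l2 ->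
  (forall i, 0 <= l1 i * s i) -> (forall i, 0 <= l2 i * s i) ->
  obstruction (fun i => l1 i + l2 i) s a -> obstruction l1 s a \/ obstruction l2 s a.
Proof.
move=> dep1 dep2 l1_s l2_s [_ _ /eqP sg_ne].
have [ob1|not_ob1] := pselect (obstruction l1 s a); first by left.
have [ob2|not_ob2] := pselect (obstruction l2 s a); first by right.
have sg_opp l : dependency u l -> (forall i, 0 <= l i * s i) -> ~ obstruction l s a ->
    Num.sg (\sum_i l i * a i) = - Num.sg (\sum_i l i * s i).
  by move=> dep_l l_s not_ob; apply/eqP/negPn/negP => ne; apply: not_ob.
exfalso; apply: sg_ne; under eq_bigr do rewrite mulrDl; under [in RHS]eq_bigr do rewrite mulrDl.
rewrite !big_split /=; apply: sgrD_opp; try exact: sg_opp; exact: sumr_ge0.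
Qed.

Section Motzkin.
Variables (s a : 'I_m -> R).
Hypothesis s_sign : forall i, Num.sg (s i) = s i.

Local Notation V := ('rV[R]_n * R^o * R^o)%type.

Let tpart (y : V) : R := y.1.2.
Let spart (y : V) : R := y.2.
Let hform i (y : V) := dotv (u i) y.1.1 - a i * tpart y.

(* [y = ((x, t), sigma)] with [sigma > 0] and all [system j y >= 0] homogenizes a
   point [x / t] with sign vector [s]; [sigma] is the slack of the strict signs. *)
Let system (j : 'I_m * bool + unit) (y : V) : R :=
  match j with
  | inl (i, true) => if s i == 0 then hform i y else s i * hform i y - spart y
  | inl (i, false) => if s i == 0 then - hform i y else 0
  | inr _ => tpart y - spart y
  end.

Let system_linear j : linear_for *%R (system j).
Proof.
have sc (c r : R^o) : c *: r = c * r by [].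
case: j => [[i []]|_] c y z /=; rewrite /hform /tpart /spart /= ?dotvDr ?dotvZr ?sc;
  by (try case: ifP => _); ring.
Qed.

Let system_infeasible : ~ (exists x, forall i, sign_vector u a x i = s i) ->
  ~ exists y, (forall j, j \in index_enum _ -> 0 <= system j y) /\ - spart y < 0.
Proof.
move=> no_x [[[x t] sigma] [y_sys /=]]; rewrite oppr_lt0 => sigma_gt0.
have sys j := y_sys j (mem_index_enum j).
have t_gt0 : 0 < t by have := sys (inr tt); rewrite /= subr_ge0; exact: lt_le_trans.
apply: no_x; exists (t^-1 *: x) => i; rewrite /sign_vector.
have -> : dotv (u i) (t^-1 *: x) - a i = t^-1 * hform i ((x, t), sigma).
  by rewrite /hform /tpart /= dotvZr; field; exact: lt0r_neq0.
rewrite sgrM gtr0_sg ?invr_gt0 // mul1r.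
have := sys (inl (i, false)); have := sys (inl (i, true)) => /=.
case: eqP => [-> h_ge0 h_le0|/eqP s_neq0 h_gt0 _].
  by apply/eqP; rewrite sgr_eq0 eq_le h_ge0 -oppr_ge0 h_le0.
have pos : 0 < s i * hform i ((x, t), sigma) by rewrite -subr_ge0 in h_gt0; lra.
rewrite -s_sign; apply: sg_eq_of_mul_ge0 => //; last by rewrite s_sign ltW.
by apply: contraTneq pos => ->; rewrite mulr0 ltxx.
Qed.

Let system_comb (mu : 'I_m * bool + unit -> R) y :
  \sum_j mu j * system j y =
  \sum_i ((if s i == 0 then mu (inl (i, true)) - mu (inl (i, false))
           else mu (inl (i, true)) * s i) * hform i y
          - spart y * (if s i == 0 then 0 else mu (inl (i, true))))
  + mu (inr tt) * (tpart y - spart y).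
Proof.
rewrite big_sumType (big_pred1 tt); last by case.
rewrite (eq_bigr (fun p => mu (inl (p.1, p.2)) * system (inl (p.1, p.2)) y)) => [|[] //].
rewrite -(pair_bigA _ (fun i b => mu (inl (i, b)) * system (inl (i, b)) y)) /=.
by congr (_ + _); apply: eq_bigr => i _; rewrite big_bool /=; case: ifP => _; ring.
Qed.

Lemma motzkin : ~ (exists x, forall i, sign_vector u a x i = s i) ->
  exists l, obstruction l s a.
Proof.
move=> /system_infeasible infeasible.
have lin_g : linear_for *%R (fun y => - spart y).
  by move=> c y z; rewrite /spart /= opprD mulrN.
have [mu mu_ge0 mu_sys] := farkas (index_enum_uniq _) system_linear lin_g infeasible.
pose lam i := if s i == 0 then mu (inl (i, true)) - mu (inl (i, false))
              else mu (inl (i, true)) * s i.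
pose nu i := if s i == 0 then 0 else mu (inl (i, true)).
have key y : - spart y = dotv (\sum_i lam i *: u i) y.1.1 - tpart y * \sum_i lam i * a i
                     - spart y * \sum_i nu i + mu (inr tt) * (tpart y - spart y).
  rewrite {1}mu_sys system_comb dotv_suml !mulr_sumr -!sumrB; congr (_ + _).
  apply: eq_bigr => i _; rewrite dotvZl /hform /lam /nu.
  by set l_i := (if _ then _ else _ * _); set nu_i := (if _ then 0 else _); ring.
have dep_lam : dependency u lam.
  apply/eqP; rewrite -dotvv_eq0.
  by have := key ((\sum_i lam i *: u i, 0), 0); rewrite /tpart /spart /=; lra.
have sum_a : \sum_i lam i * a i = mu (inr tt).
  by have := key ((0, 1), 0); rewrite /tpart /spart /= dotv0r; lra.
have sum_nu : \sum_i nu i + mu (inr tt) = 1.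
  by have := key ((0, 0), 1); rewrite /tpart /spart /= dotv0r; lra.
have lam_s i : lam i * s i = nu i.
  rewrite /lam /nu; case: eqP => [->|/eqP s_neq0]; first by rewrite mulr0.
  by rewrite -mulrA -{1}s_sign -{2}s_sign -sgrM gtr0_sg ?mulr1 // lt_def mulf_neq0 ?sqr_ge0.
have nu_ge0 i : 0 <= nu i by rewrite /nu; case: ifP.
exists lam; split => // [i|]; first by rewrite lam_s.
have -> : \sum_i lam i * s i = \sum_i nu i by apply: eq_bigr => i _; exact: lam_s.
rewrite sum_a; apply/eqP => sg_opp.
have : 0 <= Num.sg (mu (inr tt)) by rewrite sgr_ge0.
rewrite sg_opp oppr_ge0 sgr_le0 => nu_le0.
have nu0 : \sum_i nu i = 0 by apply/eqP; rewrite eq_le nu_le0 sumr_ge0.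
by move: sg_opp sum_nu; rewrite nu0 sgr0 oppr0 add0r => /eqP; rewrite sgr_eq0 => /eqP ->; lra.
Qed.

End Motzkin.

End Obstructions.

Section CircuitVectors.
Variables (R : realType) (n m : nat) (u : 'I_m -> 'rV[R]_n).
Variable c : {set 'I_m} -> 'rV[R]_m.
Hypothesis c_circuit : circuit_vectors u c.

Lemma circuit_neq0 C : circuit u C -> exists i, c C 0 i != 0.
Proof.
move=> C_circ; have [_ c_supp] := c_circuit C_circ.
have [i iC] : exists i, i \in C.
  apply/set0Pn; apply: contraNneq C_circ.1 => ->.
  by rewrite /image_mem enum_set0 nil_free.
by exists i; rewrite c_supp.
Qed.

Lemma conformal_circuit l i0 : dependency u l -> l i0 != 0 ->
  exists2 C, circuit u C & exists2 mu : R, mu != 0 & conformal (fun i => mu * c C 0 i) l.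
Proof.
move: {2}#|supp l| (leqnn #|supp l|) => N; elim: N l i0 => [|N IH] l i0 l_N dep_l l_i0.
  by move: l_N; rewrite leqn0 cards_eq0 => /eqP/setP/(_ i0); rewrite !inE l_i0.
have [C C_l C_circ] := exists_circuit (dependency_not_free dep_l l_i0).
have [dep_c c_supp] := c_circuit C_circ.
have [i c_i] := circuit_neq0 C_circ.
have l_i : l i != 0 by have := fintype.subsetP C_l i; rewrite -c_supp inE => /(_ c_i).
pose e := Num.sg (l i * c C 0 i); pose be j := e * c C 0 j.
have e_neq0 : e != 0 by rewrite sgr_eq0 mulf_neq0.
have pos : 0 < l i * be i by rewrite /be mulrCA -normrEsg normr_gt0 mulf_neq0.
have be_supp j : l j = 0 -> be j = 0.
  move=> l_j; have : j \notin C by apply/negP => /(fintype.subsetP C_l); rewrite inE l_j eqxx.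
  by rewrite -c_supp negbK => /eqP c_j; rewrite /be c_j mulr0.
have [t t_gt0 [conf_l' supp_l']] := conformal_elimination pos be_supp.
have [[j l'_j]|l'0] := pselect (exists j, l j - t * be j != 0).
  have l'_N : (#|supp (fun j => (l j - t * be j)%R)| <= N)%N.
    by rewrite -ltnS (leq_trans supp_l' l_N).
  have dep_l' := dependency_sub t dep_l (dependency_scale e dep_c).
  have [C' C'_circ [mu mu0 conf]] := IH _ j l'_N dep_l' l'_j.
  by exists C' => //; exists mu => //; exact: conformal_trans conf conf_l'.
exists C => //; exists (t * e); first by rewrite mulf_neq0 // lt0r_neq0.
suff -> : (fun j => t * e * c C 0 j) = l by exact: conformal_refl.
apply/funext => j; apply/eqP; rewrite -mulrA eq_sym -subr_eq0.
by apply/negPn/negP => l'_j; apply: l'0; exists j.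
Qed.

Lemma obstruction_circuit l s a : obstruction u l s a ->
  exists2 C, circuit u C & exists mu, obstruction u (fun i => mu * c C 0 i) s a.
Proof.
move: {2}#|supp l| (leqnn #|supp l|) => N; elim: N l => [|N IH] l l_N ob_l;
  have [i0 l_i0] := obstruction_neq0 ob_l.
  by move: l_N; rewrite leqn0 cards_eq0 => /eqP/setP/(_ i0); rewrite !inE l_i0.
have [dep_l l_s _] := ob_l.
have [C C_circ [mu mu0 conf]] := conformal_circuit dep_l l_i0.
pose nu i := mu * c C 0 i.
have [i nu_i] : exists i, nu i != 0.
  by have [i c_i] := circuit_neq0 C_circ; exists i; rewrite mulf_neq0.
have l_i : l i != 0 by apply: contra nu_i => /eqP/(conf i).1 nu0; apply/eqP.
have pos : 0 < l i * nu i by rewrite lt_def mulf_neq0 // mulrC (conf i).2.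
have [t t_gt0 [conf' supp']] := conformal_elimination pos (fun j => (conf j).1).
have dep_nu : dependency u nu := dependency_scale mu (c_circuit C_circ).1.
have tnu_s j : 0 <= t * nu j * s j.
  by rewrite -mulrA; apply: mulr_ge0; [exact: ltW|exact: (conformal_sign conf l_s j)].
have : obstruction u (fun j => (l j - t * nu j) + t * nu j) s a.
  by rewrite (_ : (fun j => _) = l) //; apply/funext => j; rewrite subrK.
case/(obstruction_split (dependency_sub t dep_l dep_nu) (dependency_scale t dep_nu)
        (conformal_sign conf' l_s) tnu_s) => [ob'|ob_nu].
  by apply: IH ob'; rewrite -ltnS (leq_trans supp' l_N).
exists C => //; exists (t * mu).
by rewrite (_ : (fun i => _) = fun i => t * nu i) //; apply/funext => j; rewrite /nu mulrA.
Qed.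

Lemma transl_sign_vectors_sub (a b : 'rV[R]_m) :
  same_sign (circuit u) c (fun=> 0) a b ->
  sign_vectors_sub setT u (fun i => a 0 i) u (fun i => b 0 i).
Proof.
move=> ab x; pose s := sign_vector u (fun i => a 0 i) x.
have [[x' x's]|no_x'] :=
  pselect (exists x', forall i, sign_vector u (fun i => b 0 i) x' i = s i).
  by exists x' => i _; rewrite x's.
have [l ob_l] := motzkin (fun i => sgr_id _) no_x'.
have [C C_circ [mu [dep_C C_s sg_b]]] := obstruction_circuit ob_l.
have sum_c (z : 'rV[R]_m) : \sum_i mu * c C 0 i * z 0 i = mu * dotv (c C) z.
  by rewrite /dotv mulr_sumr; apply: eq_bigr => i _; rewrite mulrA.
have /(obstruction_infeasible (u := u)) : obstruction u (fun i => mu * c C 0 i) s (fun i => a 0 i).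
  split => //; move: sg_b; rewrite !sum_c !sgrM.
  by have := ab C C_circ; rewrite !subr0 => ->.
by case; exists x.
Qed.

End CircuitVectors.

Lemma dotv_lift (R : realType) (n : nat) (w : 'rV[R]_n) (al : R) (z : 'rV[R]_(n + 1)) :
  dotv (row_mx w (const_mx al : 'rV_1)) z = dotv w (lsubmx z) + al * rsubmx z 0 0.
Proof. by rewrite -{1}(hsubmxK z) dotv_row_mx /dotv big_ord1 mxE. Qed.

Section Homogenization.
Variables (R : realType) (n : nat) (I : Type) (u : I -> 'rV[R]_n) (a b : I -> R).
Hypotheses (sub_ab : sign_vectors_sub setT u a u b)
  (sub_ab_opp : sign_vectors_sub setT u (fun i => - a i) u (fun i => - b i)).

Let lift (d : I -> R) i : 'rV[R]_(n + 1) := row_mx (u i) (const_mx (d i)).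

(* Rescaling [z = (x, t)] by [|t|] lands in the translate by [a] if [t < 0] and
   by [- a] if [t > 0]. *)
Lemma homogenize (z : 'rV[R]_(n + 1)) : exists z' : 'rV[R]_(n + 1),
  Num.sg (rsubmx z 0 0) = Num.sg (rsubmx z' 0 0) /\
  forall i, sign_vector (lift a) (fun=> 0) z i = sign_vector (lift b) (fun=> 0) z' i.
Proof.
set x := lsubmx z; set t := rsubmx z 0 0.
have z_sg d i : sign_vector (lift d) (fun=> 0) z i = Num.sg (dotv (u i) x + d i * t).
  by rewrite /sign_vector subr0 dotv_lift.
have lift_sg d y r i :
    sign_vector (lift d) (fun=> 0) (row_mx y (const_mx r)) i = Num.sg (dotv (u i) y + d i * r).
  by rewrite /sign_vector subr0 dotv_lift row_mxKl row_mxKr mxE.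
have [t_lt0|t_gt0|t0] := ltgtP t 0; last by exists z; split => // i; rewrite !z_sg t0 !mulr0.
- have [x' xx'] := sub_ab ((- t)^-1 *: x).
  exists (row_mx x' (const_mx (-1))); split; first by rewrite row_mxKr mxE (ltr0_sg t_lt0) sgrN1.
  move=> i; rewrite z_sg lift_sg (_ : _ + _ = - t * (dotv (u i) ((- t)^-1 *: x) - a i)).
    by rewrite sgrM gtr0_sg ?oppr_gt0 // mul1r [LHS]xx' //; congr Num.sg; ring.
  by rewrite dotvZr; field; rewrite ?oppr_eq0 lt_eqF.
- have [x' xx'] := sub_ab_opp (t^-1 *: x).
  exists (row_mx x' (const_mx 1)); split; first by rewrite row_mxKr mxE (gtr0_sg t_gt0) sgr1.
  move=> i; rewrite z_sg lift_sg (_ : _ + _ = t * (dotv (u i) (t^-1 *: x) - - a i)).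
    by rewrite sgrM gtr0_sg // mul1r [LHS]xx' //; congr Num.sg; ring.
  by rewrite dotvZr; field; rewrite gt_eqF.
Qed.

End Homogenization.

Section DerivedArrangement.
Variables (R : realType) (n m : nat) (u : 'I_m -> 'rV[R]_n).
Variable c : {set 'I_m} -> 'rV[R]_m.
Hypothesis c_circuit : circuit_vectors u c.
Variables (a b : 'rV[R]_m).
Hypothesis ab : same_sign (circuit u) c (fun=> 0) a b.

Let transl_opp_sign_vectors_sub :
  sign_vectors_sub setT u (fun i => - a 0 i) u (fun i => - b 0 i).
Proof.
have ab_opp : same_sign (circuit u) c (fun=> 0) (- a) (- b).
  by move=> C C_circ; rewrite !subr0 !dotvNr !sgrN; have := ab C_circ; rewrite !subr0 => ->.
move=> x; have [x' xx'] := transl_sign_vectors_sub c_circuit ab_opp x.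
by exists x' => i _; move: (xx' i Logic.I); rewrite /sign_vector !mxE.
Qed.

Lemma cone_sign_vectors_sub :
  sign_vectors_sub setT (cone_normal u a) (fun=> 0) (cone_normal u b) (fun=> 0).
Proof.
move=> z; have [z' [last_sg zz']] :=
  homogenize (transl_sign_vectors_sub c_circuit ab) transl_opp_sign_vectors_sub z.
exists z' => -[i|] _; first exact: zz'.
by rewrite /sign_vector /= !subr0 !dotv_lift !dotv0l !add0r !mul1r; exact: last_sg.
Qed.

Lemma lift_sign_vectors_sub :
  sign_vectors_sub setT (fun i => row_mx (u i) (const_mx (a 0 i) : 'rV_1)) (fun=> 0)
                        (fun i => row_mx (u i) (const_mx (b 0 i) : 'rV_1)) (fun=> 0).
Proof.
move=> z; have [z' [_ zz']] :=
  homogenize (transl_sign_vectors_sub c_circuit ab) transl_opp_sign_vectors_sub z.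
by exists z' => i _; exact: zz'.
Qed.

End DerivedArrangement.

Theorem theorem1p2 (R : realType) (n m : nat) (u : 'I_m -> 'rV[R]_n)
  (c : {set 'I_m} -> 'rV[R]_m) (F : set 'rV[R]_m) (a b : 'rV[R]_m) :
  (forall i, u i != 0) ->
  circuit_vectors u c ->
  derived_faces u c F ->
  derived_relint u c F a ->
  derived_relint u c F b ->
  [/\ normally_equiv_arr (transl_faces u a) (transl_faces u b),
      poset_iso (transl_faces u a) (transl_faces u b),
      poset_iso (cone_faces u a) (cone_faces u b) &
      poset_iso (lift_faces u a) (lift_faces u b)].
Proof.
move=> _ c_circuit _ a_F b_F.
have ab := arr_relint_same_sign a_F b_F; have ba := arr_relint_same_sign b_F a_F.
have transl_ab := transl_sign_vectors_sub c_circuit ab.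
have transl_ba := transl_sign_vectors_sub c_circuit ba.
split.
- exact: normally_equiv_of_sign_vectors transl_ab transl_ba.
- exact: poset_iso_of_sign_vectors transl_ab transl_ba.
- exact: poset_iso_of_sign_vectors (cone_sign_vectors_sub c_circuit ab)
                                   (cone_sign_vectors_sub c_circuit ba).
- exact: poset_iso_of_sign_vectors (lift_sign_vectors_sub c_circuit ab)
                                   (lift_sign_vectors_sub c_circuit ba).
Qed.
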